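(* Let $\mathbf{u}$ be an $m$-dimensional unit vector with entries in $\mathcal{R}_{12}$ such that $\mathrm{lde}(\mathbf{u})=0$. Then for any $0\le j\le m-1$ there exists a sequence $G_1,\ldots,G_q$ of one-level operators of type $\zeta_{12}$ and two-level operators of type $X$ and $H'$ such that $G_1\cdots G_q\mathbf{u}=\mathbf{e}_j$.
   Context: $\zeta_{12}=e^{2\pi i/12}$, $\mathcal{R}_{12}$ is the smallest subring of $\mathbb{C}$ containing $1/2$ and $\zeta_{12}$, and $\mathbb{Z}[\zeta_{12}]$ the smallest subring containing $\zeta_{12}$. Let $\delta=1+i$. For a vector $\mathbf{u}$ over $\mathcal{R}_{12}$, $\mathrm{lde}(\mathbf{u})$ is the smallest $\ell\in\mathbb{N}$ such that $\delta^\ell\mathbf{u}$ has all entries in $\mathbb{Z}[\zeta_{12}]$. $\mathbf{e}_j$ is the $j$-th standard basis vector. $X=\begin{bmatrix}0&1\\1&0\end{bmatrix}$, $H'=\frac{1+i}{2}\begin{bmatrix}1&1\\1&-1\end{bmatrix}$. The one-level operator $c_{[j]}$ of type $c$ is the $m\times m$ identity with $(j,j)$ entry replaced by $c$; the two-level operator $M_{[j,j']}$ ($j<j'$) of type $M\in\mathrm{M}_2(\mathbb{C})$ is the $m\times m$ identity with entries at $(j,j),(j,j'),(j',j),(j',j')$ replaced by $M_{1,1},M_{1,2},M_{2,1},M_{2,2}$. *)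

From HB Require Import structures.
From mathcomp Require Import all_boot all_order all_algebra all_field.
Set Implicit Arguments. Unset Strict Implicit. Unset Printing Implicit Defensive.
Import Order.TTheory GRing.Theory Num.Theory.
Local Open Scope ring_scope.

(* zeta_12 = e^{2 pi i/12} = (sqrt 3 + i)/2 *)
Definition zeta12 : algC := (sqrtC 3%:R + 'i) / 2%:R.

Inductive inR12 : algC -> Prop :=
| R12_one : inR12 1
| R12_half : inR12 (2%:R)^-1
| R12_zeta : inR12 zeta12
| R12_add x y : inR12 x -> inR12 y -> inR12 (x + y)
| R12_opp x : inR12 x -> inR12 (- x)
| R12_mul x y : inR12 x -> inR12 y -> inR12 (x * y).

Inductive inZ12 : algC -> Prop :=
| Z12_one : inZ12 1
| Z12_zeta : inZ12 zeta12
| Z12_add x y : inZ12 x -> inZ12 y -> inZ12 (x + y)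
| Z12_opp x : inZ12 x -> inZ12 (- x)
| Z12_mul x y : inZ12 x -> inZ12 y -> inZ12 (x * y).

Definition delta : algC := 1 + 'i.

Definition is_lde (m : nat) (u : 'cV[algC]_m) (l : nat) : Prop :=
  (forall i, inZ12 (delta ^+ l * u i 0)) /\
  (forall l', (forall i, inZ12 (delta ^+ l' * u i 0)) -> (l <= l')%N).

Definition unit_vector (m : nat) (u : 'cV[algC]_m) : Prop :=
  \sum_(i < m) `|u i 0| ^+ 2 = 1.

Definition Xmx : 'M[algC]_2 := \matrix_(a < 2, b < 2) (a != b)%:R.
Definition Hpmx : 'M[algC]_2 :=
  \matrix_(a < 2, b < 2) ((1 + 'i) / 2%:R * (if (a == 1) && (b == 1) then -1 else 1)).

Definition onelevel (m : nat) (c : algC) (j : 'I_m) : 'M[algC]_m :=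
  \matrix_(a, b) (if (a == j) && (b == j) then c else (a == b)%:R).

Definition twolevel (m : nat) (M : 'M[algC]_2) (j j' : 'I_m) : 'M[algC]_m :=
  \matrix_(a, b)
    (if (a == j) && (b == j) then M 0 0
     else if (a == j) && (b == j') then M 0 1
     else if (a == j') && (b == j) then M 1 0
     else if (a == j') && (b == j') then M 1 1
     else (a == b)%:R).

Definition allowed_gate (m : nat) (G : 'M[algC]_m) : Prop :=
  (exists j : 'I_m, G = onelevel zeta12 j) \/
  (exists j j' : 'I_m, (j < j')%N /\ (G = twolevel Xmx j j' \/ G = twolevel Hpmx j j')).

(* G_1 ... G_q applied to u, for s = [:: G_1; ...; G_q] *)
Definition apply_seq (m : nat) (s : seq 'M[algC]_m) (u : 'cV[algC]_m) : 'cV[algC]_m :=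
  foldr (fun G v => G *m v) u s.

(* An entry of [u] lies in Z[zeta12], the integer span of 1, zeta, zeta^2,
   zeta^3, and its squared modulus has the form N + M sqrt 3 with integers N
   and M, where N >= 0 vanishes only at 0 and N = 1 only at units, which are
   twelfth roots of unity. As sqrt 3 is irrational, |u|^2 = 1 forces the
   N-parts to sum to 1, so [u] is a power of zeta times a basis vector e_k:
   powers of zeta_[k] turn it into e_k, and X_[k,j] moves e_k to e_j. *)
From mathcomp Require Import all_boot all_order all_algebra all_field.
From mathcomp Require Import ring lra zify.
Import Order.TTheory GRing.Theory Num.Theory.
Local Open Scope ring_scope.

Lemma sqr_eq_prime_mulsqr (p a b : nat) : prime p -> (a ^ 2 = p * b ^ 2)%N -> b = 0%N.
Proof.
move=> p_pr eq_ab; case: (posnP b) => // b_gt0.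
have := congr1 (logn p) eq_ab.
rewrite lognM ?(prime_gt0 p_pr) ?expn_gt0 ?b_gt0 // !lognX (logn_prime _ p_pr) eqxx.
lia.
Qed.

Lemma sqrtC_prime_irrational (p : nat) (A B : int) : prime p ->
  A%:~R + B%:~R * sqrtC p%:R = 0 :> algC -> A = 0 /\ B = 0.
Proof.
move=> p_pr sum0.
have defA : A%:~R = - (B%:~R * sqrtC p%:R) :> algC by apply/eqP; rewrite -subr_eq0 opprK sum0.
have : (A ^+ 2)%:~R = (p%:Z * B ^+ 2)%:~R :> algC.
  by rewrite rmorphXn rmorphM /= rmorphXn /= defA sqrrN exprMn sqrtCK; ring.
move/intr_inj/(congr1 absz); rewrite abszM !abszX /= => /(@sqr_eq_prime_mulsqr p _ _ p_pr).
move/eqP; rewrite absz_eq0 => /eqP B0.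
by split=> //; apply: (intr_inj (R := algC)); rewrite defA B0; ring.
Qed.

Local Notation s3 := (sqrtC (3%:R : algC)).

Lemma s3_real : s3 \is Num.real.
Proof. by apply: ger0_real; rewrite sqrtC_ge0 ler0n. Qed.

Lemma zeta12_sqr : zeta12 ^+ 2 = (1 + s3 * 'i) / 2%:R.
Proof.
have -> : zeta12 ^+ 2 = (1 + s3 * 'i) / 2%:R + ((s3 ^+ 2 - 3%:R) + ('i ^+ 2 + 1)) / 4%:R.
  by rewrite /zeta12; field; rewrite ?pnatr_eq0.
by rewrite sqrtCK sqrCi !subrr addNr addr0 mul0r addr0.
Qed.

Lemma zeta12_cube : zeta12 ^+ 3 = 'i.
Proof.
have -> : zeta12 ^+ 3 = 'i + ((s3 ^+ 2 - 3%:R) * (s3 + 3%:R * 'i)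
    + ('i ^+ 2 + 1) * (3%:R * s3 + 'i)) / 8%:R.
  by rewrite /zeta12; field; rewrite ?pnatr_eq0.
by rewrite sqrtCK sqrCi !subrr addNr !mul0r addr0 mul0r addr0.
Qed.

Lemma zeta12_cyclotomic : zeta12 ^+ 4 = zeta12 ^+ 2 - 1.
Proof.
rewrite (exprM zeta12 2 2) zeta12_sqr.
have -> : ((1 + s3 * 'i) / 2%:R) ^+ 2 = (1 + s3 * 'i) / 2%:R - 1
    + ((s3 ^+ 2 - 3%:R) * 'i ^+ 2 + 3%:R * ('i ^+ 2 + 1)) / 4%:R.
  by field; rewrite ?pnatr_eq0.
by rewrite sqrtCK sqrCi !subrr addNr mulr0 mul0r addr0 mul0r addr0.
Qed.

Definition zcoord := (int * int * int * int)%type.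

Definition zeval (v : zcoord) : algC :=
  let: (p, q, r, t) := v in
  p%:~R + q%:~R * zeta12 + r%:~R * zeta12 ^+ 2 + t%:~R * zeta12 ^+ 3.

Lemma inZ12_zeval x : inZ12 x -> exists v, x = zeval v.
Proof.
have zeta12_minpoly : zeta12 ^+ 4 - zeta12 ^+ 2 + 1 = 0 by rewrite zeta12_cyclotomic; ring.
elim=> {x}.
- by exists (1, 0, 0, 0); rewrite /zeval; ring.
- by exists (0, 1, 0, 0); rewrite /zeval; ring.
- move=> x y _ [[[[p q] r] t] ->] _ [[[[p' q'] r'] t'] ->].
  by exists (p + p', q + q', r + r', t + t'); rewrite /zeval; ring.
- move=> x _ [[[[p q] r] t] ->].
  by exists (- p, - q, - r, - t); rewrite /zeval; ring.
- move=> x y _ [[[[p q] r] t] ->] _ [[[[p' q'] r'] t'] ->].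
  pose c4 := q * t' + r * r' + t * q'; pose c5 := r * t' + t * r'; pose c6 := t * t'.
  exists (p * p' - c4 - c6, p * q' + q * p' - c5,
          p * r' + q * q' + r * p' + c4, p * t' + q * r' + r * q' + t * p' + c5).
  (* reduce the degree-6 product modulo zeta^4 - zeta^2 + 1 *)
  pose K := c4%:~R + c5%:~R * zeta12 + c6%:~R * (zeta12 ^+ 2 + 1).
  by rewrite -[RHS]addr0 -(mulr0 K) -zeta12_minpoly /zeval /K /c4 /c5 /c6; ring.
Qed.

Definition zmul_zeta (v : zcoord) : zcoord :=
  let: (p, q, r, t) := v in (- t, p, q + t, r).

Lemma zeval_mul_zeta v : zeta12 * zeval v = zeval (zmul_zeta v).
Proof.
case: v => [[[p q] r] t]; rewrite /zeval /=.
transitivity (p%:~R * zeta12 + q%:~R * zeta12 ^+ 2 + r%:~R * zeta12 ^+ 3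
              + t%:~R * zeta12 ^+ 4); first by ring.
by rewrite zeta12_cyclotomic; ring.
Qed.

Lemma zeval_mul_zetaX n v : zeta12 ^+ n * zeval v = zeval (iter n zmul_zeta v).
Proof.
elim: n v => [|n IHn] v; first by rewrite expr0 mul1r.
by rewrite exprSr -mulrA zeval_mul_zeta IHn iterSr.
Qed.

Definition znorm (v : zcoord) : int :=
  let: (p, q, r, t) := v in p * p + p * r + r * r + q * q + q * t + t * t.

Definition zcross (v : zcoord) : int :=
  let: (p, q, r, t) := v in p * q + q * r + r * t.

Lemma normC2_zeval v : `|zeval v| ^+ 2 = (znorm v)%:~R + (zcross v)%:~R * s3.
Proof.
case: v => [[[p q] r] t]; rewrite /zeval /znorm /zcross.
have real_half (x y : int) : ((x%:~R + y%:~R * s3) / 2%:R : algC) \is Num.real.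
  by apply: rpredM; rewrite ?rpredV ?realn ?rpredD ?rpredM ?realz ?s3_real.
pose a : algC := ((2 * p + r)%:~R + q%:~R * s3) / 2%:R.
pose b : algC := ((q + 2 * t)%:~R + r%:~R * s3) / 2%:R.
have -> : p%:~R + q%:~R * zeta12 + r%:~R * zeta12 ^+ 2 + t%:~R * zeta12 ^+ 3 = a + 'i * b.
  by rewrite zeta12_sqr zeta12_cube /zeta12 /a /b; field; rewrite ?pnatr_eq0.
rewrite normC2_rect ?real_half //.
have -> : a ^+ 2 + b ^+ 2 = (p * p + p * r + r * r + q * q + q * t + t * t)%:~R
    + (p * q + q * r + r * t)%:~R * s3 + (q%:~R ^+ 2 + r%:~R ^+ 2) * (s3 ^+ 2 - 3%:R) / 4%:R.
  by rewrite /a /b; field; rewrite ?pnatr_eq0.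
by rewrite sqrtCK subrr mulr0 mul0r addr0.
Qed.

Lemma eisenstein_form_ge0 (p r : int) : 0 <= p * p + p * r + r * r.
Proof.
have := sqr_ge0 (2 * p + r); have := sqr_ge0 r; rewrite !expr2; nia.
Qed.

Lemma znorm_ge0 v : 0 <= znorm v.
Proof.
case: v => [[[p q] r] t] /=.
by have := eisenstein_form_ge0 p r; have := eisenstein_form_ge0 q t; lia.
Qed.

Lemma znorm_eq0 v : znorm v = 0 -> zeval v = 0.
Proof.
case: v => [[[p q] r] t] /= N0.
have := eisenstein_form_ge0 p r; have := eisenstein_form_ge0 q t => Fqt Fpr.
have [-> ->] : p = 0 /\ r = 0 by nia.
have [-> ->] : q = 0 /\ t = 0 by nia.
by rewrite /zeval; ring.
Qed.

Lemma znorm_eq1 v : znorm v = 1 -> exists n, zeta12 ^+ n * zeval v = 1.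
Proof.
move=> N1.
suff : has (fun n => iter n zmul_zeta v == (1, 0, 0, 0)) (iota 0 12).
  by case/hasP => n _ /eqP vn; exists n; rewrite zeval_mul_zetaX vn /zeval; ring.
move: N1; case: v => [[[p q] r] t] /= N1.
have := eisenstein_form_ge0 p r; have := eisenstein_form_ge0 q t => Fqt Fpr.
have bound (x y : int) : x * x + x * y + y * y <= 1 -> [|| x == -1, x == 0 | x == 1].
  by move=> Fxy; have := sqr_ge0 (2 * y + x); rewrite expr2 => ?; lia.
have /bound p_range : p * p + p * r + r * r <= 1 by lia.
have /bound r_range : r * r + r * p + p * p <= 1 by lia.
have /bound q_range : q * q + q * t + t * t <= 1 by lia.
have /bound t_range : t * t + t * q + q * q <= 1 by lia.
(* the twelve units of Z[zeta12] are the orbit of 1 under multiplication by zeta *)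
move/eqP: N1; apply/implyP.
by case/or3P: p_range => /eqP ->; case/or3P: q_range => /eqP ->;
  case/or3P: r_range => /eqP ->; case/or3P: t_range => /eqP ->.
Qed.

Lemma psumz_eq1 (I : finType) (F : I -> int) : (forall i, 0 <= F i) ->
  \sum_i F i = 1 -> exists k, F k = 1 /\ forall i, i != k -> F i = 0.
Proof.
move=> F_ge0 sumF1.
have [k Fk_neq0] : exists k, F k != 0.
  case: (pickP (fun k => F k != 0)) => [k ?|F0]; first by exists k.
  by move: sumF1; rewrite big1 // => i _; apply/eqP/negbFE/F0.
move: sumF1; rewrite (bigD1 k) //=; set rest := \sum_(i | _) _ => sumF1.
have rest_ge0 : 0 <= rest by apply: sumr_ge0.
have Fk_gt0 : 0 < F k by rewrite lt0r Fk_neq0 F_ge0.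
have rest0 : rest = 0 by lia.
exists k; split; first by lia.
by move=> i ik; apply: (psumr_eq0P _ rest0) => // ? _.
Qed.

Section UnitVector.

Context {m : nat} {u : 'cV[algC]_m} {f : 'I_m -> zcoord}.
Hypothesis u_zeval : forall i, u i 0 = zeval (f i).

Lemma unit_vector_sum_znorm : unit_vector u -> \sum_i znorm (f i) = 1.
Proof.
rewrite /unit_vector; under eq_bigr do rewrite u_zeval normC2_zeval.
rewrite big_split /= -mulr_suml -!rmorph_sum /= => sum1.
have [sumN1 _] : (\sum_i znorm (f i) - 1 = 0) /\ (\sum_i zcross (f i) = 0).
  by apply: (@sqrtC_prime_irrational 3) => //; rewrite rmorphB /= addrAC sum1 subrr.
by apply/eqP; rewrite -subr_eq0 sumN1.
Qed.

Lemma unit_vector_scaled_delta : unit_vector u ->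
  exists (k : 'I_m) (c : algC), u = c *: delta_mx k 0 /\ exists n, zeta12 ^+ n * c = 1.
Proof.
move/unit_vector_sum_znorm/(@psumz_eq1 _ _ (fun i => znorm_ge0 (f i))) => [k [Nk1 N0]].
exists k, (u k 0); split; last by rewrite u_zeval; apply: znorm_eq1.
apply/matrixP => a b; rewrite ord1 !mxE eqxx andbT.
case: (eqVneq a k) => [->|ak]; first by rewrite mulr1.
by rewrite mulr0 u_zeval znorm_eq0 ?N0.
Qed.

End UnitVector.

Section Gates.

Context {m : nat}.
Implicit Types (u v w : 'cV[algC]_m) (j k : 'I_m).

Definition reachable u v := exists s : seq 'M[algC]_m,
  (forall G, G \in s -> allowed_gate G) /\ apply_seq s u = v.

Lemma reachable_trans {u v w} : reachable u v -> reachable v w -> reachable u w.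
Proof.
move=> [s1 [s1_ok s1u]] [s2 [s2_ok s2v]]; exists (s2 ++ s1); split.
  by move=> G; rewrite mem_cat => /orP[]; [apply: s2_ok | apply: s1_ok].
by rewrite /apply_seq foldr_cat -/(apply_seq s1 u) s1u.
Qed.

Lemma onelevel_delta (c : algC) k :
  onelevel c k *m delta_mx k 0 = c *: (delta_mx k 0 : 'cV[algC]_m).
Proof.
rewrite -colE; apply/matrixP => a b; rewrite ord1 !mxE eqxx andbT.
by case: eqP; rewrite ?mulr1 ?mulr0.
Qed.

Lemma reachable_scale_zetaX n (c : algC) k :
  reachable (c *: delta_mx k 0) ((zeta12 ^+ n * c) *: delta_mx k 0).
Proof.
exists (nseq n (onelevel zeta12 k)); split.
  by move=> G; rewrite mem_nseq => /andP[_ /eqP ->]; left; exists k.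
elim: n => [|n IHn]; first by rewrite /= mul1r.
by rewrite [LHS]/= -/(apply_seq _ _) IHn -scalemxAr onelevel_delta scalerA exprSr mulrAC.
Qed.

Lemma twolevel_Xmx_deltaL j j' : j != j' ->
  twolevel Xmx j j' *m delta_mx j 0 = (delta_mx j' 0 : 'cV[algC]_m).
Proof.
move=> jj'; rewrite -colE; apply/matrixP => a b; rewrite ord1 !mxE !eqxx /= !andbT.
by case: (eqVneq a j) => [->|_] /=; [rewrite (negbTE jj') | case: (a == j')].
Qed.

Lemma twolevel_Xmx_deltaR j j' : j != j' ->
  twolevel Xmx j j' *m delta_mx j' 0 = (delta_mx j 0 : 'cV[algC]_m).
Proof.
move=> jj'; rewrite -colE; apply/matrixP => a b; rewrite ord1 !mxE !eqxx /= !andbT.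
by rewrite [j' == j]eq_sym (negbTE jj') !andbF; case: (a == j); case: (a == j').
Qed.

Lemma reachable_delta k j : reachable (delta_mx k 0) (delta_mx j 0).
Proof.
have X_ok j1 j2 : (j1 < j2)%N -> allowed_gate (twolevel Xmx j1 j2).
  by move=> j12; right; exists j1, j2; split => //; left.
have single G : allowed_gate G -> forall G', G' \in [:: G] -> allowed_gate G'.
  by move=> ? G'; rewrite inE => /eqP ->.
case: (ltngtP k j) => [kj|jk|/val_inj <-]; last by exists [::].
- exists [:: twolevel Xmx k j]; split; first exact/single/X_ok.
  by rewrite /= twolevel_Xmx_deltaL // neq_ltn kj.
- exists [:: twolevel Xmx j k]; split; first exact/single/X_ok.
  by rewrite /= twolevel_Xmx_deltaR // neq_ltn jk.
Qed.

End Gates.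

Theorem lemma7p2 (m : nat) (u : 'cV[algC]_m) :
  (forall i, inR12 (u i 0)) -> unit_vector u -> is_lde u 0 ->
  forall j : 'I_m, exists s : seq 'M[algC]_m,
    (forall G, G \in s -> allowed_gate G) /\ apply_seq s u = delta_mx j 0.
Proof.
(* membership in R_12 already follows from lde u = 0 *)
move=> _ u_unit [u_Z12 _] j.
have Z12_u i : inZ12 (u i 0) by have := u_Z12 i; rewrite expr0 mul1r.
have [f u_zeval] := fin_all_exists (fun i => @inZ12_zeval _ (Z12_u i)).
have [k [c [-> [n zetan_c]]]] := unit_vector_scaled_delta u_zeval u_unit.
have := reachable_scale_zetaX n c k; rewrite zetan_c scale1r => to_delta.
exact: reachable_trans to_delta (reachable_delta k j).
Qed.
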